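(* Let $G$ be a finite group. Then every subgroup of $G$ (including $G$ itself) is $\psi$-divisible if and only if $G$ is cyclic of square-free order.
   Context: For a finite group $G$, $\psi(G)=\sum_{x\in G} o(x)$ denotes the sum of the orders of all elements of $G$. A finite group $G$ is called $\psi$-divisible if $\psi(H)$ divides $\psi(G)$ for every subgroup $H$ of $G$. *)

From mathcomp Require Import all_boot all_fingroup.
Set Implicit Arguments. Unset Strict Implicit. Unset Printing Implicit Defensive.
Local Open Scope group_scope.

Definition psi (gT : finGroupType) (A : {set gT}) : nat :=
  (\sum_(x in A) #[x])%N.

Definition psi_divisible (gT : finGroupType) (G : {group gT}) : bool :=
  [forall H : {group gT}, (H \subset G) ==> (psi H %| psi G)%N].

Definition square_free (n : nat) : Prop :=
  forall p : nat, prime p -> ~~ (p * p %| n)%N.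

From mathcomp Require Import all_boot all_fingroup all_solvable zify.
Set Implicit Arguments. Unset Strict Implicit. Unset Printing Implicit Defensive.

(* psi is multiplicative on direct products of subgroups of coprime orders,
   and in a cyclic group H of square-free order every subgroup K is such a
   direct factor, so psi K divides psi H.
   Conversely, in a group of order p^2 the elements outside a subgroup C_p
   all have the same order p^m, and psi (C_p) = 1 + (p - 1) p is coprime to
   their contribution (p - 1) p p^m; this rules out subgroups of order p^2.
   A minimal non-cyclic subgroup M then has square-free order and cyclic
   proper subgroups.  If no non-central element of M generated a normal
   subgroup, the centralisers of non-central elements would be
   self-normalising and pairwise meet inside Z(M), and two conjugacy classes
   of them would cover more than |M| - |Z(M)| elements.  So some non-central
   x of prime order q has <x> normal in M; taking y of prime order p not
   commuting with x, the non-abelian group <x><y> of order pq has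
   psi = psi (C_q) + (p - 1) p q, divisible by neither psi (C_q) nor psi (C_p). *)

Lemma coprime_psi_prime p m : prime p ->
  coprime (1 + (p - 1) * p) ((p - 1) * p * p ^ m).
Proof.
move=> pp; set a := (p - 1) * p.
have ap : p %| a by apply: dvdn_mull.
rewrite coprimeMr add1n coprimeSn coprimeXr //.
by rewrite coprime_sym prime_coprime // -addn1 dvdn_addr // dvdn1 gtn_eqF ?prime_gt1.
Qed.

Lemma psi_prime_ndvd p m : prime p ->
  ~~ (1 + (p - 1) * p %| 1 + (p - 1) * p + (p - 1) * p * p ^ m).
Proof.
move=> pp; rewrite dvdn_addr //; apply/negP => /gcdn_idPl.
rewrite (eqP (coprime_psi_prime m pp)); have := prime_gt1 pp; nia.
Qed.

Lemma psi_prime_pair_ndvd p q : prime p -> prime q -> p != q ->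
  ~~ ((1 + (q - 1) * q %| 1 + (q - 1) * q + (p - 1) * p * q)
      && (1 + (p - 1) * p %| 1 + (q - 1) * q + (p - 1) * p * q)).
Proof.
move=> pp pq npq; have p1 := prime_gt1 pp; have q1 := prime_gt1 pq.
apply/negP => /andP[dq dp]; case: (ltngtP p q) => [lt_pq | lt_qp | epq].
- have cq : coprime (1 + (q - 1) * q) q.
    by have := coprime_psi_prime 0 pq; rewrite expn0 muln1 coprimeMr => /andP[].
  move: dq; rewrite dvdn_addr // Gauss_dvdl // => /dvdn_leq; nia.
- move: dp; have -> : 1 + (q - 1) * q + (p - 1) * p * q
                      = (1 + (p - 1) * p) * q + (q - 1) * (q - 1) by nia.
  rewrite dvdn_addr; last exact: dvdn_mulr.
  move=> /dvdn_leq; nia.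
- by rewrite epq eqxx in npq.
Qed.

Lemma ltn_sub_halves n z a b : 0 < n -> 0 < z -> 2 * a <= n -> 2 * b <= n ->
  n - z < (n - a) + (n - b).
Proof. lia. Qed.

Lemma square_freeS m n : m %| n -> square_free n -> square_free m.
Proof.
by move=> dvd_mn sqf_n p pp; apply: contra (sqf_n p pp) => /dvdn_trans; apply.
Qed.

Lemma square_free_gt0 n : square_free n -> 0 < n.
Proof. by case: n => // /(_ 2 isT). Qed.

Lemma square_free_logn n p : square_free n -> logn p n <= 1.
Proof.
move=> sqf_n; rewrite leqNgt; apply/negP => lt1.
have pp : prime p by move: (ltnW lt1); rewrite logn_gt0 mem_primes => /andP[].
by case/negP: (sqf_n p pp); rewrite mulnn pfactor_dvdn ?square_free_gt0.
Qed.

Lemma square_free_coprime_divn n d : square_free n -> d %| n -> coprime d (n %/ d).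
Proof.
move=> sqf_n dvd_dn; have n_gt0 := square_free_gt0 sqf_n.
have d_gt0 := dvdn_gt0 n_gt0 dvd_dn.
have nd_gt0 : 0 < n %/ d by rewrite divn_gt0 // dvdn_leq.
rewrite /coprime eqn_leq gcdn_gt0 d_gt0 andbT leqNgt; apply/negP => g_gt1.
have p_dvd := dvdn_trans (pdiv_dvd (gcdn d (n %/ d))).
case/negP: (sqf_n _ (pdiv_prime g_gt1)); rewrite -[X in _ %| X](divnK dvd_dn).
by rewrite dvdn_mul ?p_dvd ?dvdn_gcdl ?dvdn_gcdr.
Qed.

Local Open Scope group_scope.

Section SquareFreeOrder.

Variable gT : finGroupType.
Implicit Types G : {group gT}.

Lemma square_free_Zgroup G : square_free #|G| -> Zgroup G.
Proof.
move=> sqfG; apply/forall_inP => P /SylowP[p pp sylP].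
apply: (dvdn_prime_cyclic pp); rewrite (card_Hall sylP) p_part.
by rewrite -[X in _ %| X]expn1 dvdn_exp2l // square_free_logn.
Qed.

Lemma square_free_abelian_cyclic G : square_free #|G| -> abelian G -> cyclic G.
Proof. by move=> sqfG /abelian_nil; apply: nil_Zgroup_cyclic; apply: square_free_Zgroup. Qed.

Lemma square_free_constt_prime (x : gT) (p : nat) : square_free #[x] -> x.`_p != 1 ->
  prime #[x.`_p].
Proof.
move=> sqfx; rewrite -order_eq1 order_constt p_part => ox_neq1.
have logx_gt0 : 0 < logn p #[x] by apply: contraNT ox_neq1; rewrite lt0n negbK => /eqP ->.
have -> : logn p #[x] = 1%N by apply/eqP; rewrite eqn_leq logx_gt0 square_free_logn.
by move: logx_gt0; rewrite expn1 logn_gt0 mem_primes => /andP[].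
Qed.

Lemma square_free_prime_cycle_notin (C : {group gT}) x :
  square_free #[x] -> x \notin C -> exists2 r, r \in <[x]> & (r \notin C) && prime #[r].
Proof.
move=> sqfx xNC.
have /allPn[p _ xpNC] : ~~ all (fun p : nat => x.`_p \in C) (index_iota 0 #[x].+1).
  apply: contra xNC => /allP allC; rewrite -(prod_constt x) big_seq.
  by apply: group_prod => p /allC.
exists x.`_p; first exact: cycle_constt.
rewrite xpNC square_free_constt_prime //.
by apply: contraNneq xpNC => ->; apply: group1.
Qed.

End SquareFreeOrder.

Section Psi.

Variable gT : finGroupType.
Implicit Types G H J K L Q X : {group gT}.

Lemma psi_setD H K d : K \subset H -> {in H :\: K, forall x, #[x] = d} ->
  psi H = (psi K + (#|H| - #|K|) * d)%N.
Proof.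
move=> sKH ordHK; rewrite /psi (big_setID K) /= (setIidPr sKH).
by rewrite (eq_bigr _ ordHK) sum_nat_const cardsD (setIidPr sKH).
Qed.

Lemma psi_prime X : prime #|X| -> psi X = (1 + (#|X| - 1) * #|X|)%N.
Proof.
move=> pX; rewrite (@psi_setD X 1%G #|X|) ?sub1G ?cards1 /psi ?big_set1 ?order1 //.
move=> x /setD1P[nx1 xX]; have /primeP[_ /(_ _ (order_dvdG xX))] := pX.
by rewrite order_eq1 (negbTE nx1) => /eqP.
Qed.

Lemma psi_divisible_dvd H K : psi_divisible H -> K \subset H -> psi K %| psi H.
Proof. by move=> /forallP /(_ K) /implyP. Qed.

Lemma psi_mulg K L : L \subset 'C(K) -> coprime #|K| #|L| ->
  psi (K * L) = (psi K * psi L)%N.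
Proof.
move=> cKL coKL; have tiKL := coprime_TIg coKL.
rewrite /psi -imset_mulgm big_imset /=; last first.
  move=> [a b] [a' b'] /setXP[/= aK bL] /setXP[/= aK' bL'] /= eq_ab.
  by congr pair; [rewrite -(divgrMid tiKL aK bL) eq_ab divgrMid
                 | rewrite -(remgrMid tiKL aK bL) eq_ab remgrMid].
transitivity (\sum_(u | (u.1 \in K) && (u.2 \in L)) #[u.1 * u.2])%N.
  by apply: eq_big => [[a b]|[a b] _]; rewrite ?in_setX.
rewrite -(pair_big (mem K) (mem L) (fun a b => #[a * b])) /= big_distrl /=.
apply: eq_bigr => a aK; rewrite big_distrr; apply: eq_bigr => b bL /=.
apply: orderM; first exact/commute_sym/(centsP cKL).
by rewrite (coprime_dvdl (order_dvdG aK)) // (coprime_dvdr (order_dvdG bL)).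
Qed.

Lemma cyclic_square_free_psi_divisible H :
  cyclic H -> square_free #|H| -> psi_divisible H.
Proof.
move=> /cyclicP[g defH] sqfH; apply/forallP => K; apply/implyP => sKH.
have dvdKH : #|K| %| #|H| by apply: cardSg.
pose L := <[g ^+ #|K|]>%G.
have oL : #|L| = (#|H| %/ #|K|)%N by rewrite -orderE orderXdiv /order -defH.
have sLH : L \subset H by rewrite cycle_subG defH mem_cycle.
have cKL : L \subset 'C(K).
  have abH : abelian H by rewrite defH cycle_abelian.
  exact: subset_trans sLH (subset_trans abH (centS sKH)).
have coKL : coprime #|K| #|L| by rewrite oL square_free_coprime_divn.
have defKL : K * L = H.
  apply/eqP; rewrite eqEcard mulG_subG sKH sLH /=.
  by rewrite TI_cardMg ?coprime_TIg // oL mulnC divnK.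
by rewrite -defKL psi_mulg // dvdn_mulr.
Qed.

Lemma card_p2_not_psi_divisible Q p : prime p -> #|Q| = (p ^ 2)%N ->
  ~~ psi_divisible Q.
Proof.
move=> pp oQ; apply/negP => divQ.
have [x xQ ox] : {x | x \in Q & #[x] = p} by apply: Cauchy; rewrite ?oQ ?dvdn_exp.
pose X := <[x]>%G; have sXQ : X \subset Q by rewrite cycle_subG.
have ord_outside y : y \in Q :\: X -> #[y] = p \/ #[y] = (p ^ 2)%N.
  case/setDP => yQ yX; have /dvdn_pfactor[//|[|[|[|k]]] // _ oy] : #[y] %| p ^ 2.
    by rewrite -oQ order_dvdG.
  - by move/eqP: oy; rewrite order_eq1 => /eqP y1; rewrite y1 group1 in yX.
  - by left.
  - by right.
have [m ordQX] : exists m, {in Q :\: X, forall y, #[y] = (p ^ m)%N}.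
  case cQ : (cyclic Q); [exists 2%N | exists 1%N] => y yQX; rewrite ?expn1;
    case: (ord_outside y yQX) => // oy.
    have /setDP[yQ /negP[]] := yQX.
    have /eqP <- : <[y]> == X :> {set gT}.
      by rewrite (eq_subG_cyclic cQ) ?cycle_subG // -!orderE oy ox.
    exact: cycle_id.
  have /setDP[yQ _] := yQX; case/negP: (negbT cQ); apply/cyclicP; exists y.
  by apply/eqP; rewrite eq_sym eqEcard cycle_subG yQ -orderE oy oQ /=.
have := psi_divisible_dvd divQ sXQ.
rewrite (psi_setD sXQ ordQX) psi_prime -orderE ox ?oQ //.
have -> : (p ^ 2 - p = (p - 1) * p)%N by rewrite mulnBl mul1n mulnn.
by rewrite (negbTE (psi_prime_ndvd m pp)).
Qed.

Lemma psi_divisible_square_free G :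
  (forall H, H \subset G -> psi_divisible H) -> square_free #|G|.
Proof.
move=> divG p pp; apply/negP; rewrite mulnn => dvd_p2G.
have [P sylP] := Sylow_exists p G.
have logP : 1 < logn p #|P| by rewrite (card_Hall sylP) logn_part -pfactor_dvdn.
have [Q [sQP _ oQ]] := normal_pgroup (pHall_pgroup sylP) (normal_refl P) logP.
have sQG := subset_trans sQP (pHall_sub sylP).
by move: (divG Q sQG); rewrite (negbTE (card_p2_not_psi_divisible pp oQ)).
Qed.

Lemma order_outside_normal_prime J X p q :
  prime p -> prime q -> p != q -> #|X| = q -> #|J| = (q * p)%N ->
  X <| J -> ~~ cyclic J -> {in J :\: X, forall h, #[h] = p}.
Proof.
move=> pp pq npq oX oJ nsXJ ncJ h /setDP[hJ hX].
have dvd_hqp : #[h] %| q * p by rewrite -oJ order_dvdG.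
have coqp : coprime q p by rewrite prime_coprime // dvdn_prime2 // eq_sym.
have [q_dvd_h | q_ndvd_h] := boolP (q %| #[h]); last first.
  have coh : coprime #[h] q by rewrite coprime_sym prime_coprime.
  have := dvd_hqp; rewrite (Gauss_dvdr _ coh) => /(primeP pp).2/orP[].
    by rewrite order_eq1 => /eqP h1; rewrite h1 group1 in hX.
  by move/eqP.
case/negP: ncJ; have [p_dvd_h | p_ndvd_h] := boolP (p %| #[h]).
  have oh : #[h] = (q * p)%N.
    by apply/eqP; rewrite eqn_dvd dvd_hqp Gauss_dvd ?q_dvd_h.
  by apply/cyclicP; exists h; apply/eqP; rewrite eq_sym eqEcard cycle_subG hJ -orderE oh oJ /=.
have oh : #[h] = q.
  have coh : coprime #[h] p by rewrite coprime_sym prime_coprime.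
  by apply/eqP; rewrite eqn_dvd q_dvd_h -(Gauss_dvdl _ coh) dvd_hqp.
have nXh : <[h]> \subset 'N(X) by rewrite cycle_subG (subsetP (normal_norm nsXJ)).
have tiXh : X :&: <[h]> = 1 by rewrite setIC prime_TIg -?orderE ?oh // cycle_subG.
have sXhJ : X <*> <[h]> \subset J by rewrite join_subG normal_sub // cycle_subG.
have := cardSg sXhJ; rewrite /= norm_joinEr // TI_cardMg // oJ oX -orderE oh.
by rewrite dvdn_pmul2l ?prime_gt0 // dvdn_prime2 // eq_sym (negbTE npq).
Qed.

Lemma psi_divisible_normal_prime_commute (x y : gT) :
  prime #[x] -> prime #[y] -> y \in 'N(<[x]>) ->
  psi_divisible (<[x]> <*> <[y]>)%G -> commute x y.
Proof.
move=> px py nXy divJ; set q := #[x] in px; set p := #[y] in py.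
pose X := <[x]>%G; pose Y := <[y]>%G; pose J := (X <*> Y)%G.
have [yX | yNX] := boolP (y \in X); first by case/cycleP: yX => k ->; apply: commuteX.
have xJ : x \in J by rewrite mem_gen // inE cycle_id.
have yJ : y \in J by rewrite mem_gen // inE cycle_id orbT.
have nXY : Y \subset 'N(X) by rewrite cycle_subG.
have tiXY : X :&: Y = 1 by rewrite setIC prime_TIg // cycle_subG.
have oJ : #|J| = (q * p)%N by rewrite /= norm_joinEr // TI_cardMg.
have [epq | npq] := eqVneq p q.
  have abJ : abelian J by apply: (card_p2group_abelian py); rewrite oJ epq mulnn.
  exact: (centsP abJ).
apply/eqP; move: divJ; apply: contraTT => ncxy.
have ncJ : ~~ cyclic J.
  by apply: contra ncxy => /cyclic_abelian /centsP cJ; apply/eqP; apply: cJ.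
have nsXJ : X <| J by rewrite /normal joing_subl join_subG normG.
have ordJX := order_outside_normal_prime py px npq (erefl _) oJ nsXJ ncJ.
have psiJ : psi J = (1 + (q - 1) * q + (p - 1) * p * q)%N.
  rewrite (psi_setD (joing_subl X Y) ordJX) psi_prime /= -orderE // -/q.
  by rewrite [#|_|]oJ; nia.
apply/negP => divJ; have := psi_divisible_dvd divJ (joing_subl X Y).
have := psi_divisible_dvd divJ (joing_subr X Y).
rewrite psiJ !psi_prime -?orderE // -/p -/q => dvdY dvdX.
by case/negP: (psi_prime_pair_ndvd py px npq); rewrite dvdX dvdY.
Qed.

End Psi.

Section MinimalNonCyclic.

Variables (gT : finGroupType) (G : {group gT}).
Hypothesis cyclic_proper : forall H : {group gT}, H \proper G -> cyclic H.

Lemma subcent1_proper r : r \in G :\: 'Z(G) -> 'C_G[r] \proper G.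
Proof.
case/setDP => rG rNZ; rewrite properEneq subsetIl andbT.
by apply: contraNneq rNZ => defG; rewrite inE rG -sub_cent1 -{1}defG subsetIr.
Qed.

Lemma subcent1_abelian r : r \in G :\: 'Z(G) -> abelian 'C_G[r].
Proof. by move/subcent1_proper/cyclic_proper/cyclic_abelian. Qed.

Lemma center_sub_subcent1 r : r \in G -> 'Z(G) \subset 'C_G[r].
Proof.
move=> rG; rewrite subsetI center_sub sub_cent1.
by apply: subsetP rG; rewrite centsC subsetIr.
Qed.

Lemma card_subcent1_ge r : r \in G :\: 'Z(G) -> 2 * #|'Z(G)| <= #|'C_G[r]|.
Proof.
case/setDP => rG rNZ; have sZC := center_sub_subcent1 rG.
rewrite -(Lagrange sZC) mulnC leq_mul2l indexg_gt1 orbC; apply/orP; left.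
by apply: contra rNZ => /subsetP; apply; rewrite inE rG cent1id.
Qed.

Lemma subcent1_TI r s : r \in G :\: 'Z(G) -> s \in G :\: 'Z(G) ->
  'C_G[r] != 'C_G[s] -> 'C_G[r] :&: 'C_G[s] \subset 'Z(G).
Proof.
move=> rGZ sGZ neq_rs; have /setDP[rG _] := rGZ; have /setDP[sG _] := sGZ.
have [s_cr | s_ncr] := boolP (s \in 'C[r]).
  have sub_cent a b : a \in G :\: 'Z(G) -> b \in 'C_G[a] -> 'C_G[a] \subset 'C_G[b].
    move=> aGZ bC; apply/subsetP => g gC; rewrite inE (subsetP (subsetIl _ _) g gC).
    exact/cent1P/(centsP (subcent1_abelian aGZ)).
  by case/negP: neq_rs; rewrite eqEsubset !sub_cent // inE ?rG ?sG // cent1C.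
have defG : <[r]> <*> <[s]> = G.
  apply/eqP; rewrite eqEproper join_subG !cycle_subG rG sG /=.
  apply: contra s_ncr => /cyclic_proper/cyclic_abelian/centsP abJ.
  by apply/cent1P; apply: abJ; rewrite mem_gen // inE cycle_id ?orbT.
apply/subsetP => g /setIP[/setIP[gG gCr] /setIP[_ gCs]].
by rewrite inE gG -sub_cent1 -defG join_subG !cycle_subG cent1C gCr cent1C gCs.
Qed.

Definition noncentral_cents := [set 'C_G[r] | r in G :\: 'Z(G)].

Lemma noncentral_centsJ D g : D \in noncentral_cents -> g \in G ->
  D :^ g \in noncentral_cents.
Proof.
case/imsetP => r /setDP[rG rNZ] -> gG; rewrite conjIg conjGid // -cent1J.
have nZg : g \in 'N('Z(G)) by apply: subsetP gG; apply: normal_norm (center_normal G).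
by apply: imset_f; rewrite in_setD memJ_norm // rNZ groupJ.
Qed.

Lemma card_cover_noncentral_cents (S : {set {set gT}}) :
  S \subset noncentral_cents ->
  #|\bigcup_(D in S) (D :\: 'Z(G))| = (\sum_(D in S) #|D :\: 'Z(G)|)%N.
Proof.
move=> sS; have memS D : D \in S -> exists2 r, r \in G :\: 'Z(G) & D = 'C_G[r].
  by move/(subsetP sS)/imsetP.
have [trivS injS] : trivIset [set D :\: 'Z(G) | D in S]
                    /\ {in S &, injective (fun D => D :\: 'Z(G))}.
  apply: trivIimset => [D1 D2 /memS[r rGZ ->] /memS[s sGZ ->] neq | ].
    rewrite -setI_eq0 eqEsubset sub0set andbT; apply/subsetP => x.
    case/setIP=> /setDP[xr xNZ] /setDP[xs _]; rewrite eq_sym in neq.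
    by move: xNZ; rewrite (subsetP (subcent1_TI rGZ sGZ neq)) // inE xr.
  apply/imsetP => -[_ /memS[r rGZ ->] /esym/setP/(_ r)].
  have /setDP[rG rNZ] := rGZ.
  by rewrite in_setD rNZ in_setI rG cent1id inE.
by move/eqP: trivS; rewrite big_imset // cover_imset => ->.
Qed.

Lemma subcent1_self_normalising r : r \in G :\: 'Z(G) -> ~~ (G \subset 'N(<[r]>)) ->
  'N_G('C_G[r]) = 'C_G[r].
Proof.
move=> rGZ nGr; have /setDP[rG _] := rGZ.
have rC : r \in 'C_G[r] by rewrite inE rG cent1id.
have rN : r \in 'N_G('C_G[r]) by rewrite inE rG (subsetP (normG _)).
have prN : 'N_G('C_G[r]) \proper G.
  rewrite properEneq subsetIl andbT; apply: contraNneq nGr => defN.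
  have nCG : G \subset 'N('C_G[r]) by rewrite -{1}defN subsetIr.
  apply: char_norm_trans nCG; rewrite sub_cyclic_char ?cycle_subG //.
  exact: cyclic_proper (subcent1_proper rGZ).
apply/eqP; rewrite eqEsubset !subsetI subsetIl normG subsetIl /= andbT.
by rewrite sub_cent1 (subsetP (cyclic_abelian (cyclic_proper prN))).
Qed.

Lemma card_conjugates_subcent1 r : r \in G :\: 'Z(G) -> ~~ (G \subset 'N(<[r]>)) ->
  (#|'C_G[r] :^: G| * #|'C_G[r]|)%N = #|G|.
Proof.
move=> rGZ nGr; rewrite card_conjugates subcent1_self_normalising //.
by rewrite mulnC Lagrange ?subsetIl.
Qed.

Lemma sum_card_conjugates_setD (D A : {set gT}) : D \subset G -> A \subset D -> A <| G ->
  (\sum_(E in D :^: G) #|E :\: A| = #|D :^: G| * (#|D| - #|A|))%N.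
Proof.
move=> sDG sAD nsAG; rewrite -sum_nat_const; apply: eq_bigr => _ /imsetP[g gG ->].
by rewrite -{1}(normsP (normal_norm nsAG) g gG) -conjDg cardJg cardsD (setIidPr sAD).
Qed.

Lemma conjugates_subcent1_sub r : r \in G :\: 'Z(G) ->
  'C_G[r] :^: G \subset noncentral_cents.
Proof.
move=> rGZ; apply/subsetP => _ /imsetP[g gG ->].
by rewrite noncentral_centsJ //; apply: imset_f.
Qed.

Lemma sum_conjugates_subcent1 r : r \in G :\: 'Z(G) -> ~~ (G \subset 'N(<[r]>)) ->
  (\sum_(E in 'C_G[r] :^: G) #|E :\: 'Z(G)| = #|G| - #|'C_G[r] :^: G| * #|'Z(G)|)%N.
Proof.
move=> rGZ nGr; have /setDP[rG _] := rGZ.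
have sZC := center_sub_subcent1 rG.
rewrite (sum_card_conjugates_setD (subsetIl G 'C[r]) sZC) ?center_normal //.
by rewrite mulnBr card_conjugates_subcent1.
Qed.

Lemma card_conjugates_subcent1_center r : r \in G :\: 'Z(G) -> ~~ (G \subset 'N(<[r]>)) ->
  2 * (#|'C_G[r] :^: G| * #|'Z(G)|) <= #|G|.
Proof.
move=> rGZ nGr; rewrite -(card_conjugates_subcent1 rGZ nGr) mulnCA leq_mul2l.
by rewrite card_subcent1_ge ?orbT.
Qed.

Lemma minimal_noncyclic_normal_cycle : ~~ abelian G ->
  exists2 r, r \in G :\: 'Z(G) & G \subset 'N(<[r]>).
Proof.
move=> nabG; have [/exists_inP // | /exists_inP no_normal] :=
  boolP [exists r in G :\: 'Z(G), G \subset 'N(<[r]>)].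
have nN r : r \in G :\: 'Z(G) -> ~~ (G \subset 'N(<[r]>)).
  by move=> rGZ; apply/negP => nGr; apply: no_normal; exists r.
exfalso; have Z_gt0 : 0 < #|'Z(G)| := cardG_gt0 _.
have cardGZ : #|G :\: 'Z(G)| = (#|G| - #|'Z(G)|)%N.
  by rewrite cardsD (setIidPr (center_sub G)).
have /subsetPn[r rG rNZ] : ~~ (G \subset 'Z(G)).
  by apply: contra nabG => sGZ; apply: subset_trans sGZ (subsetIr _ _).
have rGZ : r \in G :\: 'Z(G) by rewrite inE rNZ.
have /subsetPn[y yGZ yNcover] :
    ~~ (G :\: 'Z(G) \subset \bigcup_(E in 'C_G[r] :^: G) (E :\: 'Z(G))).
  rewrite (contra (@subset_leq_card _ _ _)) // card_cover_noncentral_cents.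
    rewrite sum_conjugates_subcent1 ?nN // cardGZ -ltnNge.
    have := card_conjugates_subcent1_center rGZ (nN _ rGZ).
    have : 1 < #|'C_G[r] :^: G|.
      rewrite -(ltn_pmul2r (cardG_gt0 'C_G[r]%G)) mul1n card_conjugates_subcent1 ?nN //.
      exact: proper_card (subcent1_proper rGZ).
    nia.
  exact: conjugates_subcent1_sub.
have D2_notin : 'C_G[y] \notin 'C_G[r] :^: G.
  apply: contra yNcover => D2r; apply/bigcupP; exists 'C_G[y] => //.
  by rewrite in_setD (setDP yGZ).2 inE (setDP yGZ).1 cent1id.
have disj : [disjoint 'C_G[r] :^: G & 'C_G[y] :^: G].
  rewrite -setI_eq0; apply/eqP/setP => E; rewrite in_setI in_set0.
  apply/negP => /andP[/imsetP[g gG ->] /imsetP[h hG eq_gh]]; case/negP: D2_notin.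
  by apply/imsetP; exists (g * h^-1); rewrite ?groupM ?groupV // conjsgM eq_gh conjsgK.
have sub_cents : 'C_G[r] :^: G :|: 'C_G[y] :^: G \subset noncentral_cents.
  by rewrite subUset !conjugates_subcent1_sub.
have sub_cover : \bigcup_(E in 'C_G[r] :^: G :|: 'C_G[y] :^: G) (E :\: 'Z(G))
                  \subset G :\: 'Z(G).
  by apply/bigcupsP => E /(subsetP sub_cents)/imsetP[t _ ->]; apply: setSD (subsetIl _ _).
move: (subset_leq_card sub_cover); rewrite card_cover_noncentral_cents //.
rewrite (eq_bigl [predU 'C_G[r] :^: G & 'C_G[y] :^: G]) => [|E]; last by rewrite inE.
rewrite bigU //= !sum_conjugates_subcent1 ?nN // cardGZ leqNgt.
by rewrite ltn_sub_halves ?cardG_gt0 ?card_conjugates_subcent1_center ?nN.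
Qed.

End MinimalNonCyclic.

Lemma psi_divisible_cyclic (gT : finGroupType) (G : {group gT}) :
  (forall H : {group gT}, H \subset G -> psi_divisible H) -> cyclic G.
Proof.
move=> divG; apply: contraT => ncG.
have [M /mingroupP[ncM minM] sMG] :=
  mingroup_exists (gP := [pred M : {group gT} | ~~ cyclic M]) ncG.
have sqfM := square_freeS (cardSg sMG) (psi_divisible_square_free divG).
have cycP (K : {group gT}) : K \proper M -> cyclic K.
  by case/andP => sKM; apply: contraR => /minM/(_ sKM) ->; apply: subxx.
have nabM : ~~ abelian M by apply: contra ncM; apply: square_free_abelian_cyclic.
have [r /setDP[rM rNZ] nMr] := minimal_noncyclic_normal_cycle cycP nabM.
have [x xr /andP[xNZ px]] := square_free_prime_cycle_notin
  (square_freeS (order_dvdG rM) sqfM) rNZ.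
have xM : x \in M by apply: subsetP xr; rewrite cycle_subG.
have nMx : M \subset 'N(<[x]>).
  by apply: char_norm_trans nMr; rewrite sub_cyclic_char ?cycle_cyclic ?cycle_subG.
have /subsetPn[y yM yNCx] : ~~ (M \subset 'C[x]).
  by apply: contra xNZ; rewrite sub_cent1 => xC; rewrite inE xM.
have [s sy /andP[sNCx ps]] := square_free_prime_cycle_notin
  (square_freeS (order_dvdG yM) sqfM) yNCx.
have sM : s \in M by apply: subsetP sy; rewrite cycle_subG.
have sJG : <[x]> <*> <[s]> \subset G.
  by apply: subset_trans sMG; rewrite join_subG !cycle_subG xM sM.
case/negP: sNCx; apply/cent1P/commute_sym.
exact: psi_divisible_normal_prime_commute px ps (subsetP nMx s sM) (divG _ sJG).
Qed.

Theorem theorem2p2 (gT : finGroupType) (G : {group gT}) :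
  (forall H : {group gT}, H \subset G -> psi_divisible H) <->
  (cyclic G /\ square_free #|G|).
Proof.
split=> [divG | [cycG sqfG] H sHG].
  by split; [apply: psi_divisible_cyclic | apply: psi_divisible_square_free].
apply: cyclic_square_free_psi_divisible; first exact: cyclicS sHG cycG.
exact: square_freeS (cardSg sHG) sqfG.
Qed.
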